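(* Let $U\supseteq U'$ and $V$ be finitely generated free abelian groups and let $f:U\times V\to\mathbb{Z}$ be a bilinear function whose restriction to $U'\times V$ has rank at least two. Then for every $u\in U$ the set $f(u+U',V)=\{f(u+u',v)\mid u'\in U',v\in V\}\subseteq\mathbb{Z}$ is a subgroup of $\mathbb{Z}$ containing $f(U',V)$.
   Context: The rank of a bilinear function $U'\times V\to\mathbb{Z}$ is the rank of its matrix with respect to bases of $U'$ and $V$. *)

From HB Require Import structures.
From mathcomp Require Import all_boot all_order all_algebra.
Set Implicit Arguments. Unset Strict Implicit. Unset Printing Implicit Defensive.
Import Order.TTheory GRing.Theory Num.Theory.
Local Open Scope ring_scope.

(* U = Z^n (row vectors), V = Z^m (row vectors). *)

Definition bilinearZ (n m : nat) (f : 'rV[int]_n -> 'rV[int]_m -> int) : Prop :=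
  (forall v, forall u1 u2, f (u1 + u2) v = f u1 v + f u2 v) /\
  (forall u, forall v1 v2, f u (v1 + v2) = f u v1 + f u v2).

(* The subgroup U' of U spanned by the rows of B : 'M[int]_(k, n). *)
Definition span_rows (k n : nat) (B : 'M[int]_(k, n)) : 'rV[int]_n -> Prop :=
  fun x => exists c : 'rV[int]_k, x = c *m B.

Definition int_row_free (k n : nat) (B : 'M[int]_(k, n)) : Prop :=
  forall c : 'rV[int]_k, c *m B = 0 -> c = 0.

Definition restr_matrix (k n m : nat) (f : 'rV[int]_n -> 'rV[int]_m -> int)
  (B : 'M[int]_(k, n)) : 'M[int]_(k, m) :=
  \matrix_(i < k, j < m) f (row i B) (delta_mx 0 j).

Definition int_rank (k m : nat) (A : 'M[int]_(k, m)) : nat :=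
  \rank (map_mx (fun z : int => z%:~R : rat) A).

Definition is_subgroupZ (S : int -> Prop) : Prop :=
  S 0 /\ (forall x y, S x -> S y -> S (x - y)).

From HB Require Import structures.
From mathcomp Require Import all_boot all_order all_algebra.
Set Implicit Arguments. Unset Strict Implicit. Unset Printing Implicit Defensive.
Import Order.TTheory GRing.Theory Num.Theory.
Local Open Scope ring_scope.

(* Let F be the matrix of f and M := B *m F that of its restriction, so that
   f (u + c B) v = (u F + c M) . v.  The values of a single row r form the
   ideal generated by its entries, and all values are multiples of the gcd g
   of the entries of u F and M.  So the set is gZ as soon as some row of the
   coset u F + Z^k M has entries with gcd g.  In Smith normal form M becomes
   diag(d_0, d_1, ...) with d_0 | d_1 | ... and d_1 <> 0 (rank >= 2), and it
   suffices to shift the first two coordinates a_0, a_1 of the row: choose y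
   with a_1 + y d_1 <> 0, then, by prime avoidance, x such that
   gcd(a_0 + x d_0, a_1 + y d_1) divides d_0. *)

Lemma coprimez_primes (z N : int) : N != 0 ->
  (forall p, prime p -> (p%:Z %| z)%Z -> ~~ (p%:Z %| N)%Z) -> coprimez z N.
Proof.
move=> N0 zN; rewrite coprimezE /coprime eqn_leq gcdn_gt0.
rewrite [(0 < `|N|)%N]absz_gt0 N0 orbT andbT leqNgt.
apply/negP => /pdiv_prime p_pr.
have p_dvd := pdiv_dvd (gcdn `|z| `|N|).
have := zN _ p_pr; rewrite !dvdzE absz_nat (dvdn_trans p_dvd (dvdn_gcdl _ _)).
by rewrite (dvdn_trans p_dvd (dvdn_gcdr _ _)) => /(_ isT).
Qed.

Lemma coprimez_shift (a d N : int) : N != 0 -> coprimez (gcdz a d) N ->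
  exists x : int, coprimez (a + x * d) N.
Proof.
move=> N0 adN; have N_gt0 : (0 < `|N|)%N by rewrite absz_gt0.
(* A prime factor of N divides exactly one of a and x, and if it divides a it
   cannot divide d; either way it does not divide a + x d. *)
pose x := (`|N|`_[pred p | ~~ (p %| `|a|)])%N.
exists x%:Z; apply: coprimez_primes => // p p_pr p_axd; apply/negP.
rewrite dvdzE absz_nat => p_N.
have p_x : (p %| x)%N = ~~ (p %| `|a|)%N.
  have := pi_of_part [pred q | ~~ (q %| `|a|)%N] N_gt0 p.
  by rewrite !inE !mem_primes p_pr part_gt0 N_gt0 p_N.
have p_xd : (p%:Z %| x%:Z * d)%Z = (p%:Z %| a)%Z.
  by rewrite -[x%:Z * d](addKr a) rpredDr // rpredN.
move: p_xd; rewrite !dvdzE abszM !absz_nat Euclid_dvdM // p_x.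
case p_a: (p %| `|a|)%N => //= p_d.
have : (p %| 1)%N.
  by move: adN; rewrite coprimezE absz_nat => /eqP <-; rewrite !dvdn_gcd p_a p_d.
by rewrite dvdn1 => /eqP p1; rewrite p1 in p_pr.
Qed.

Lemma gcdz_shift_dvd (a d N : int) : N != 0 ->
  exists x : int, (gcdz (a + x * d) N %| d)%Z.
Proof.
move=> N0; set g := gcdz (gcdz a d) N.
have g0 : g != 0 by rewrite gcdz_eq0 negb_and N0 orbT.
have absg : `|g|%:Z = g by rewrite gez0_abs.
have [g_a g_d] : (g %| a)%Z /\ (g %| d)%Z.
  by apply/andP; rewrite -dvdz_gcd dvdz_gcdl.
have [a' ea] : exists a', a = a' * g by exists (a %/ g)%Z; rewrite divzK.
have [d' ed] : exists d', d = d' * g by exists (d %/ g)%Z; rewrite divzK.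
have [N' eN] : exists N', N = N' * g.
  by exists (N %/ g)%Z; rewrite divzK ?dvdz_gcdr.
have gE : gcdz (gcdz a' d') N' * g = g.
  by rewrite {2}/g ea ed -mulz_gcdl absg eN -mulz_gcdl absg.
have N'0 : N' != 0 by apply: contra N0; rewrite eN => /eqP->; rewrite mul0r.
have [|x a'd'N'] := @coprimez_shift a' d' N' N'0.
  by rewrite coprimezE /coprime -eqz_nat; apply/eqP/(mulIf g0); rewrite mul1r.
exists x; rewrite ea ed eN mulrA -mulrDl -mulz_gcdl absg.
by move: a'd'N'; rewrite coprimezE /coprime /gcdz => /eqP->; rewrite mul1r -ed.
Qed.

Lemma dvdz_shift2 (a0 a1 d0 d1 : int) : d1 != 0 ->
  exists x y : int, forall g : int,
    (g %| a0 + x * d0)%Z -> (g %| a1 + y * d1)%Z -> (g %| d0)%Z.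
Proof.
move=> d1_neq0; pose y : int := (a1 == 0)%:Z.
have N_neq0 : a1 + y * d1 != 0.
  rewrite /y; case: (eqVneq a1 0) => [->|a1_neq0].
    by rewrite add0r mul1r.
  by rewrite mul0r addr0.
have [x x_dvd] := gcdz_shift_dvd a0 d0 N_neq0.
by exists x, y => g g_a0 g_a1; apply: dvdz_trans x_dvd; rewrite dvdz_gcd g_a0.
Qed.

Lemma sorted_dvdz_nth (d : seq int) i j : sorted dvdz d -> (i <= j)%N ->
  (d`_i %| d`_j)%Z.
Proof.
move=> d_sorted le_ij; have [j_lt|j_ge] := ltnP j (size d); last first.
  by rewrite nth_default ?dvdz0.
apply: (sorted_leq_nth dvdz_trans dvdzz) => //; rewrite inE //.
exact: leq_ltn_trans j_lt.
Qed.

Section DvdzMatrices.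
Variable g : int.

Lemma mxOver_dvdz_mull k m p (A : 'M[int]_(k, m)) (B : 'M[int]_(m, p)) :
  B \is a mxOver (dvdz g) -> A *m B \is a mxOver (dvdz g).
Proof.
move=> /mxOverP B_g; apply/mxOverP => i j; rewrite mxE.
by apply: rpred_sum => l _; apply: dvdz_mull.
Qed.

Lemma mxOver_dvdz_mulr k m p (A : 'M[int]_(k, m)) (B : 'M[int]_(m, p)) :
  A \is a mxOver (dvdz g) -> A *m B \is a mxOver (dvdz g).
Proof.
move=> /mxOverP A_g; apply/mxOverP => i j; rewrite mxE.
by apply: rpred_sum => l _; apply: dvdz_mulr.
Qed.

End DvdzMatrices.

Lemma Bezoutz_row p (r : 'rV[int]_p.+1) :
  exists g (w : 'cV[int]_p.+1), r *m w = g%:M /\ r \is a mxOver (dvdz g).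
Proof.
(* In Smith form r = L *m (d_0, 0, ..., 0) *m R, and invmx R isolates d_0. *)
have [L _ [R Ru [d _ ->]]] := int_Smith_normal_form r.
set LD := L *m _.
have LDE j : LD 0 j = LD 0 0 *+ (j == 0 :> nat).
  by rewrite !mxE !big_ord1 !mxE eqxx -!mulrnAr; case: (j : nat).
exists (LD 0 0), (invmx R *m delta_mx 0 0); split.
  by rewrite mulmxA mulmxK // -colE [LHS]mx11_scalar mxE.
apply: mxOver_dvdz_mulr; apply/mxOverP => i j.
by rewrite ord1 (LDE j) rpredMn ?dvdzz.
Qed.

Definition rdiag_mx k m (d : seq int) : 'M[int]_(k, m) :=
  \matrix_(i, j) (d`_i *+ (i == j :> nat)).

Lemma rdiag_mx_dvdz k m (d : seq int) (g : int) : sorted dvdz d ->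
  (g %| d`_0)%Z -> rdiag_mx k m d \is a mxOver (dvdz g).
Proof.
move=> d_sorted g_d0; apply/mxOverP => i j; rewrite mxE rpredMn //.
exact: dvdz_trans g_d0 (sorted_dvdz_nth d_sorted (leq0n i)).
Qed.

Lemma int_rank_unitmx k m (L : 'M[int]_k) (A : 'M[int]_(k, m)) (R : 'M[int]_m) :
  L \in unitmx -> R \in unitmx -> int_rank (L *m A *m R) = int_rank A.
Proof.
have map_unit p (U : 'M[int]_p) : U \in unitmx -> map_mx intr U \in unitmx.
  by rewrite !unitmxE det_map_mx; apply: rmorph_unit.
move=> Lu Ru; rewrite /int_rank !map_mxM mxrankMfree ?row_free_unit ?map_unit //.
rewrite -mxrank_tr trmx_mul mxrankMfree ?mxrank_tr //.
by rewrite row_free_unit unitmx_tr map_unit.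
Qed.

Lemma rdiag_mx_rank_ge2 k m (d : seq int) : sorted dvdz d ->
  (2 <= int_rank (rdiag_mx k.+1 m.+1 d))%N -> d`_1 != 0.
Proof.
move=> d_sorted; apply: contraTneq => d1_0; rewrite -ltnNge ltnS.
have -> : rdiag_mx k.+1 m.+1 d = d`_0 *: delta_mx 0 0.
  apply/matrixP => i j; rewrite !mxE; case: (unliftP 0 i) => [i' ->|->] /=.
    have := @sorted_dvdz_nth d 1 (bump 0 i') d_sorted isT.
    by rewrite d1_0 dvd0z => /eqP->; rewrite mul0rn mulr0.
  by rewrite mulr_natr eq_sym.
rewrite /int_rank map_mxZ map_delta_mx.
apply: leq_trans (mxrankS (scalemx_sub _ (submx_refl _))) _.
by rewrite mxrank_delta.
Qed.

Lemma rdiag_mx_coset_gcd_attained k m (d : seq int) (a : 'rV[int]_m.+2) :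
  sorted dvdz d -> d`_1 != 0 ->
  exists g (c : 'rV[int]_k.+2) (w : 'cV[int]_m.+2),
    (a + c *m rdiag_mx k.+2 m.+2 d) *m w = g%:M /\
    a \is a mxOver (dvdz g) /\ rdiag_mx k.+2 m.+2 d \is a mxOver (dvdz g).
Proof.
move=> d_sorted d1_neq0; set D := rdiag_mx _ _ d.
have [x [y xy_dvd]] := dvdz_shift2 (a 0 0) (a 0 1) d`_0 d1_neq0.
set c : 'rV_k.+2 := x *: delta_mx 0 0 + y *: delta_mx 0 1.
have [r0 r1] : (a + c *m D) 0 0 = a 0 0 + x * d`_0 /\
                (a + c *m D) 0 1 = a 0 1 + y * d`_1.
  rewrite /c mulmxDl -!scalemxAl -!rowE !mxE /= modn_small //.
  by rewrite !mulr0n !mulr1n !mulr0 !addr0 add0r.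
have [g [w [rw r_g]]] := Bezoutz_row (a + c *m D).
have D_g : D \is a mxOver (dvdz g).
  by apply: rdiag_mx_dvdz => //; apply: xy_dvd; rewrite -?r0 -?r1; apply/mxOverP.
exists g, c, w; split=> //; split=> //.
by rewrite -(addrK (c *m D) a) rpredB // mxOver_dvdz_mull.
Qed.

Lemma coset_gcd_attained k m (a : 'rV[int]_m) (M : 'M[int]_(k, m)) :
  (2 <= int_rank M)%N ->
  exists g (c : 'rV[int]_k) (w : 'cV[int]_m),
    (a + c *m M) *m w = g%:M /\
    a \is a mxOver (dvdz g) /\ M \is a mxOver (dvdz g).
Proof.
case: k M => [|[|k]] M rk; try by have := leq_trans rk (rank_leq_row _).
case: m a M rk => [|[|m]] a M rk; try by have := leq_trans rk (rank_leq_col _).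
have [L Lu [R Ru [d d_sorted ME]]] := int_Smith_normal_form M.
rewrite -/(rdiag_mx _ _ d) in ME.
have d1_neq0 : d`_1 != 0.
  apply: (@rdiag_mx_rank_ge2 k.+1 m.+1) d_sorted _.
  by rewrite -(int_rank_unitmx _ Lu Ru) -ME.
have [g [c [w [cw [a_g D_g]]]]] :=
  rdiag_mx_coset_gcd_attained k (a *m invmx R) d_sorted d1_neq0.
exists g, (c *m invmx L), (invmx R *m w); split; last split.
- by rewrite ME !mulmxA mulmxKV // -[a in a + _](mulmxKV Ru) -mulmxDl mulmxK.
- by rewrite -(mulmxKV Ru a); apply: mxOver_dvdz_mulr.
- by rewrite ME; apply/mxOver_dvdz_mulr/mxOver_dvdz_mull.
Qed.

Lemma additive_rowE p (h : 'rV[int]_p -> int) : {morph h : x y / x + y} ->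
  forall x, h x = \sum_j x 0 j * h (delta_mx 0 j).
Proof.
move=> hD x; have h0 : h 0 = 0 by apply: (addIr (h 0)); rewrite -hD !add0r.
pose hA : {additive 'rV[int]_p -> int} :=
  HB.pack h (GRing.isNmodMorphism.Build _ _ h (h0, hD)).
rewrite -[h]/(hA : _ -> _) {1}(row_sum_delta x) raddf_sum; apply: eq_bigr => j _.
by rewrite -[x 0 j]intz scaler_int raddfMz mulrzl.
Qed.

Section BilinearForm.
Variables (n m : nat) (f : 'rV[int]_n -> 'rV[int]_m -> int).
Hypothesis f_bilin : bilinearZ f.

Definition bilinear_mx : 'M[int]_(n, m) :=
  \matrix_(i, j) f (delta_mx 0 i) (delta_mx 0 j).

Lemma bilinear_mxE x y : f x y = (x *m bilinear_mx *m y^T) 0 0.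
Proof.
case: f_bilin => fl fr; rewrite (additive_rowE (fr x)) mxE.
apply: eq_bigr => j _.
rewrite (additive_rowE (fl _)) mulrC !mxE !mulr_suml.
by apply: eq_bigr => i _; rewrite mxE.
Qed.

Lemma restr_matrixE k (B : 'M[int]_(k, n)) : restr_matrix f B = B *m bilinear_mx.
Proof.
apply/matrixP => i j; rewrite mxE bilinear_mxE trmx_delta -row_mul -colE.
by rewrite !mxE.
Qed.

End BilinearForm.

Theorem mainTheorem11 (n m k : nat) (f : 'rV[int]_n -> 'rV[int]_m -> int)
  (B : 'M[int]_(k, n)) :
  bilinearZ f ->
  int_row_free B ->
  (2 <= int_rank (restr_matrix f B))%N ->
  forall u : 'rV[int]_n,
    let S := fun z : int =>
      exists u' v, span_rows B u' /\ z = f (u + u') v in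
    is_subgroupZ S /\
    (forall u' v, span_rows B u' -> S (f u' v)).
Proof.
(* B need not be a basis of U': only the rank of the restriction matters. *)
move=> f_bilin _ rk u S; set F := bilinear_mx f.
have [g [c [w [cw [uF_g M_g]]]]] := coset_gcd_attained (u *m F) rk.
rewrite restr_matrixE // in cw M_g.
have fE (c' : 'rV_k) v :
    f (u + c' *m B) v = ((u *m F + c' *m (B *m F)) *m v^T) 0 0.
  by rewrite bilinear_mxE // -/F mulmxA -mulmxDl.
have S_g z : S z <-> (g %| z)%Z.
  split=> [[_ [v [[c' ->] ->]]]|/dvdzP[s ->]].
    rewrite fE; apply/mxOverP/mxOver_dvdz_mulr.
    by rewrite rpredD // mxOver_dvdz_mull.
  exists (c *m B), (s *: w^T); split; first by exists c.
  by rewrite fE linearZ /= trmxK -scalemxAr cw !mxE mulr1n.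
split.
  split=> [|x y /S_g x_g /S_g y_g]; apply/S_g; [exact: dvdz0 | exact: rpredB].
move=> _ v [c' ->]; apply/S_g.
rewrite bilinear_mxE // -/F -[c' *m B *m F]mulmxA.
by apply/mxOverP/mxOver_dvdz_mulr/mxOver_dvdz_mull.
Qed.
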